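(* Let $\alpha_1,\ldots,\alpha_t\in\mathbb{T}$ and $\varepsilon>0$. Then: (1) there exists a positive integer $M$ such that for every $\beta\in\mathbb{T}$, if $\|\beta H_\varepsilon(\alpha_1,\ldots,\alpha_t)\|\le 1/6$ then $\beta\in\langle\alpha_1,\ldots,\alpha_t\rangle_M$; (2) for such an $M$ and every open set $V\subseteq\mathbb{T}$ with $V\supseteq\langle\alpha_1,\ldots,\alpha_t\rangle_M$, there exists a positive integer $N$ such that for every $\beta\in\mathbb{T}$, if $\|\beta H_{N,\varepsilon}(\alpha_1,\ldots,\alpha_t)\|\le 1/6$ then $\beta\in V$.
   Context: $\mathbb{T}=\mathbb{R}/\mathbb{Z}$; $\|x\|$ is the distance from $x$ to the nearest integer. Bohr sets: $H_\varepsilon(\alpha_1,\ldots,\alpha_t)=\{n\in\mathbb{N}: \|n\alpha_1\|,\ldots,\|n\alpha_t\|\le\varepsilon\}$ and $H_{N,\varepsilon}(\alpha_1,\ldots,\alpha_t)=\{n\in\mathbb{N}, n\le N: \|n\alpha_1\|,\ldots,\|n\alpha_t\|\le\varepsilon\}$. For $M\in\mathbb{N}$, $\langle\alpha_1,\ldots,\alpha_t\rangle_M=\{k_1\alpha_1+\cdots+k_t\alpha_t: k_i\in\mathbb{Z},\ |k_1|,\ldots,|k_t|\le M\}$. For $\beta\in\mathbb{T}$ and $S\subseteq\mathbb{N}$, $\|\beta S\|=\sup\{\|n\beta\|: n\in S\}$. *)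

(* elements of T = R/Z are represented by real numbers. *)
From Stdlib Require Import Reals Lra ZArith.
Open Scope R_scope.

(* ||x|| : distance from x to the nearest integer. *)
Definition dnint (x : R) : R := Rmin (frac_part x) (1 - frac_part x).

(* Bohr set H_eps(alpha_1..alpha_t) (alpha_i = alpha i, i < t), as a predicate on nat. *)
Definition Bohr (t : nat) (alpha : nat -> R) (eps : R) (n : nat) : Prop :=
  (1 <= n)%nat /\ forall i : nat, (i < t)%nat -> dnint (INR n * alpha i) <= eps.

Definition BohrN (N : nat) (t : nat) (alpha : nat -> R) (eps : R) (n : nat) : Prop :=
  Bohr t alpha eps n /\ (n <= N)%nat.

(* ||beta S|| <= c, i.e. sup { ||n beta|| : n in S } <= c. *)
Definition normS_le (beta : R) (S : nat -> Prop) (c : R) : Prop :=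
  forall n : nat, S n -> dnint (INR n * beta) <= c.

Fixpoint lincomb (t : nat) (k : nat -> Z) (alpha : nat -> R) : R :=
  match t with
  | O => 0
  | S t' => lincomb t' k alpha + IZR (k t') * alpha t'
  end.

(* beta (mod 1) belongs to <alpha_1..alpha_t>_M *)
Definition in_span (M : nat) (t : nat) (alpha : nat -> R) (beta : R) : Prop :=
  exists k : nat -> Z,
    (forall i : nat, (i < t)%nat -> (Z.abs (k i) <= Z.of_nat M)%Z) /\
    exists z : Z, beta = lincomb t k alpha + IZR z.

(* A subset of T is represented by a 1-periodic subset of R (its preimage). *)
Definition periodic (V : R -> Prop) : Prop := forall x : R, V x <-> V (x + 1).

(* Open in T = preimage open in R (quotient topology). *)
Definition openR (V : R -> Prop) : Prop :=
  forall x : R, V x -> exists d : R, 0 < d /\ forall y : R, Rabs (y - x) < d -> V y.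

From Stdlib Require Import Reals ZArith Lra Lia List Classical ClassicalEpsilon.
Import ListNotations.
Open Scope R_scope.

(* (1) The weight W(n) = 1 + sum_i (1 + cos 2 pi n alpha_i) is at least A on a small Bohr set
   H_delta and at most B < A off H_eps.  Its power W^p is a cosine polynomial whose frequencies
   k . alpha have bounded coefficients |k_i| <= D.  If beta is not in <alpha>_D, no frequency
   beta +- k . alpha is an integer, so by Dirichlet's bound the partial sums of
   W(n)^p cos(2 pi n beta) stay bounded.  But if ||n beta|| <= 1/6 on H_eps, then
   cos(2 pi n beta) >= 1/2 there, and since H_delta has lower density at least 1/Q
   (pigeonhole on the base-L digits of the n alpha_i), any p with A^p > 2 Q B^p makes these
   partial sums grow linearly.
   (2) Every point of [0,1] outside V is excluded, together with a neighbourhood, by a single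
   n in H_eps; by compactness finitely many n, hence some H_{N,eps}, suffice. *)

Lemma frac_part_add_IZR x z : frac_part (x + IZR z) = frac_part x.
Proof.
  destruct (Int_part_frac_part_spec (x + IZR z) (Int_part x + z) (frac_part x)) as [_ H].
  - pose proof (base_fp x). lra.
  - rewrite plus_IZR. pose proof (Rplus_Int_part_frac_part x). lra.
  - now rewrite H.
Qed.

Lemma dnint_add_IZR x z : dnint (x + IZR z) = dnint x.
Proof. unfold dnint. now rewrite frac_part_add_IZR. Qed.

Lemma dnint_le_dist_IZR x z : dnint x <= Rabs (x - IZR z).
Proof.
  unfold dnint. pose proof (base_fp x). pose proof (Rplus_Int_part_frac_part x).
  destruct (Z_le_gt_dec z (Int_part x)) as [Hz|Hz].
  - apply IZR_le in Hz. rewrite Rabs_right by lra.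
    apply Rle_trans with (frac_part x); [apply Rmin_l|lra].
  - assert (IZR (Int_part x) <= IZR z - 1) by (rewrite <- minus_IZR; apply IZR_le; lia).
    rewrite Rabs_left by lra.
    apply Rle_trans with (1 - frac_part x); [apply Rmin_r|lra].
Qed.

Lemma dnint_attained x : exists z, dnint x = Rabs (x - IZR z).
Proof.
  unfold dnint, Rmin. pose proof (base_fp x). pose proof (Rplus_Int_part_frac_part x).
  destruct (Rle_dec _ _).
  - exists (Int_part x). rewrite Rabs_right; lra.
  - exists (Int_part x + 1)%Z. rewrite plus_IZR, Rabs_left; lra.
Qed.

Lemma dnint_range x : 0 <= dnint x <= 1/2.
Proof. unfold dnint, Rmin. pose proof (base_fp x). destruct (Rle_dec _ _); lra. Qed.

Lemma dnint_le_dist_add x y : dnint x <= Rabs (x - y) + dnint y.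
Proof.
  destruct (dnint_attained y) as [z ->].
  eapply Rle_trans; [apply (dnint_le_dist_IZR x z)|].
  replace (x - IZR z) with ((x - y) + (y - IZR z)) by ring. apply Rabs_triang.
Qed.

Lemma cos_add_IZR_2PI y z : cos (y + IZR z * (2 * PI)) = cos y.
Proof.
  destruct (Z_le_gt_dec 0 z) as [H|H].
  - rewrite <- (Z2Nat.id z H), <- INR_IZR_INZ.
    replace (INR (Z.to_nat z) * (2 * PI)) with (2 * INR (Z.to_nat z) * PI) by ring.
    apply cos_period.
  - replace (IZR z) with (- INR (Z.to_nat (- z)))
      by (rewrite INR_IZR_INZ, Z2Nat.id, opp_IZR by lia; ring).
    rewrite <- (cos_period _ (Z.to_nat (- z))). f_equal. ring.
Qed.

Lemma cos_2PI_dnint x : cos (2 * PI * x) = cos (2 * PI * dnint x).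
Proof.
  destruct (dnint_attained x) as [z ->].
  rewrite <- (cos_add_IZR_2PI (2 * PI * x) (- z)), opp_IZR.
  unfold Rabs; destruct (Rcase_abs _); [rewrite <- cos_neg|]; f_equal; ring.
Qed.

Lemma cos_2PI_le d e : 0 <= d <= e -> e <= 1/2 -> cos (2 * PI * e) <= cos (2 * PI * d).
Proof. intros. pose proof PI_RGT_0. apply cos_decr_1; nra. Qed.

Lemma cos_2PI_lt d e : 0 <= d < e -> e <= 1/2 -> cos (2 * PI * e) < cos (2 * PI * d).
Proof. intros. pose proof PI_RGT_0. apply cos_decreasing_1; nra. Qed.

Lemma cos_2PI_ge_half d : 0 <= d <= 1/6 -> 1/2 <= cos (2 * PI * d).
Proof.
  intros. rewrite <- cos_PI3. replace (PI / 3) with (2 * PI * (1/6)) by field.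
  apply cos_2PI_le; lra.
Qed.

Lemma cos_2PI_near_one c e : 0 < c -> 0 < e -> exists d, 0 < d <= e /\ 1 - cos (2 * PI * d) < c.
Proof.
  intros Hc He. pose proof PI_RGT_0.
  destruct (continuity_cos 0 c Hc) as [r [Hr Hcos]]. simpl in Hcos.
  set (d := Rmin e (r / (4 * PI))).
  assert (0 < r / (4 * PI)) by (apply Rdiv_lt_0_compat; lra).
  assert (0 < d <= e /\ d <= r / (4 * PI)) as [Hd Hdr]
    by (unfold d, Rmin; destruct (Rle_dec _ _); lra).
  assert (2 * PI * d <= r / 2).
  { apply Rmult_le_compat_l with (r := 2 * PI) in Hdr; [|lra].
    replace (2 * PI * (r / (4 * PI))) with (r / 2) in Hdr by (field; lra). exact Hdr. }
  exists d. split; [lra|].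
  assert (Rabs (cos (2 * PI * d) - cos 0) < c) as Hlt.
  { apply Hcos. unfold D_x, no_cond, R_dist. rewrite Rminus_0_r, Rabs_right by nra.
    split; [split; [exact I|nra]|lra]. }
  rewrite cos_0 in Hlt. apply Rabs_def2 in Hlt. lra.
Qed.

Fixpoint psum (f : nat -> R) (N : nat) : R :=
  match N with O => 0 | S N' => psum f N' + f N end.

Lemma psum_add f g N : psum (fun n => f n + g n) N = psum f N + psum g N.
Proof. induction N; simpl; lra. Qed.

Lemma psum_scal c f N : psum (fun n => c * f n) N = c * psum f N.
Proof. induction N; simpl; [ring|rewrite IHN; ring]. Qed.

Lemma psum_const c N : psum (fun _ => c) N = INR N * c.
Proof. induction N; simpl psum; [simpl; ring|rewrite IHN, S_INR; ring]. Qed.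

Lemma psum_le f g N : (forall n, (1 <= n)%nat -> f n <= g n) -> psum f N <= psum g N.
Proof. intros H. induction N; simpl; [lra|]. apply Rplus_le_compat; [exact IHN|apply H; lia]. Qed.

Lemma psum_ext f g N : (forall n, (1 <= n)%nat -> f n = g n) -> psum f N = psum g N.
Proof. intros H. apply Rle_antisym; apply psum_le; intros n Hn; rewrite H by exact Hn; lra. Qed.

Definition bounded_psum (f : nat -> R) : Prop := exists K, forall N, Rabs (psum f N) <= K.

Lemma bounded_psum_add f g : bounded_psum f -> bounded_psum g -> bounded_psum (fun n => f n + g n).
Proof.
  intros [K HK] [K' HK']. exists (K + K'). intros N. rewrite psum_add.
  eapply Rle_trans; [apply Rabs_triang|]. apply Rplus_le_compat; auto.
Qed.

Lemma bounded_psum_scal c f : bounded_psum f -> bounded_psum (fun n => c * f n).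
Proof.
  intros [K HK]. exists (Rabs c * K). intros N. rewrite psum_scal, Rabs_mult.
  apply Rmult_le_compat_l; [apply Rabs_pos|auto].
Qed.

Lemma bounded_psum_ext f g : (forall n, f n = g n) -> bounded_psum f -> bounded_psum g.
Proof.
  intros H [K HK]. exists K. intros N. rewrite <- (psum_ext f g N) by auto. apply HK.
Qed.

Definition is_int (x : R) : Prop := exists z : Z, x = IZR z.

Lemma cos_psum_telescope x N :
  2 * sin (PI * x) * psum (fun n => cos (2 * PI * (INR n * x))) N
  = sin ((2 * INR N + 1) * PI * x) - sin (PI * x).
Proof.
  induction N as [|N IH].
  - simpl. replace ((2 * 0 + 1) * PI * x) with (PI * x) by ring. ring.
  - cbn [psum]. rewrite Rmult_plus_distr_l, IH, S_INR.
    replace ((2 * (INR N + 1) + 1) * PI * x) with (2 * PI * ((INR N + 1) * x) + PI * x) by ring.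
    replace ((2 * INR N + 1) * PI * x) with (2 * PI * ((INR N + 1) * x) - PI * x) by ring.
    rewrite sin_plus, sin_minus. ring.
Qed.

(* Dirichlet's bound: the partial sums are at most [1 / |sin (PI x)|]. *)
Lemma cos_psum_bounded x : ~ is_int x -> bounded_psum (fun n => cos (2 * PI * (INR n * x))).
Proof.
  intros Hx.
  assert (Hs : 0 < Rabs (sin (PI * x))).
  { apply Rabs_pos_lt. intros Hsin. apply sin_eq_0_0 in Hsin as [k Hk].
    apply Hx. exists k. pose proof PI_RGT_0. apply Rmult_eq_reg_r with PI; lra. }
  exists (1 / Rabs (sin (PI * x))). intros N.
  pose proof (cos_psum_telescope x N) as T.
  pose proof (SIN_bound ((2 * INR N + 1) * PI * x)). pose proof (SIN_bound (PI * x)).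
  assert (Rabs (sin (PI * x)) * Rabs (psum (fun n => cos (2 * PI * (INR n * x))) N) <= 1).
  { rewrite <- Rabs_mult. apply Rabs_le.
    split; apply Rmult_le_reg_l with 2; lra. }
  apply Rmult_le_reg_l with (Rabs (sin (PI * x))); [exact Hs|].
  field_simplify; lra.
Qed.

Definition zv_0 : nat -> Z := fun _ => 0%Z.
Definition zv_unit (m : nat) : nat -> Z := fun i => if Nat.eqb i m then 1%Z else 0%Z.
Definition zv_add (k k' : nat -> Z) : nat -> Z := fun i => (k i + k' i)%Z.
Definition zv_sub (k k' : nat -> Z) : nat -> Z := fun i => (k i - k' i)%Z.
Definition zv_opp (k : nat -> Z) : nat -> Z := fun i => (- k i)%Z.

Section Lincomb.

Variables (t : nat) (alpha : nat -> R).

Lemma lincomb_0 : lincomb t zv_0 alpha = 0.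
Proof. induction t; simpl; [|rewrite IHn; unfold zv_0]; simpl; ring. Qed.

Lemma lincomb_add k k' : lincomb t (zv_add k k') alpha = lincomb t k alpha + lincomb t k' alpha.
Proof. induction t; simpl; [|rewrite IHn; unfold zv_add; rewrite plus_IZR]; ring. Qed.

Lemma lincomb_sub k k' : lincomb t (zv_sub k k') alpha = lincomb t k alpha - lincomb t k' alpha.
Proof. induction t; simpl; [|rewrite IHn; unfold zv_sub; rewrite minus_IZR]; ring. Qed.

Lemma lincomb_opp k : lincomb t (zv_opp k) alpha = - lincomb t k alpha.
Proof. induction t; simpl; [|rewrite IHn; unfold zv_opp; rewrite opp_IZR]; ring. Qed.

Lemma coeffs_bounded (k : nat -> Z) :
  exists D : nat, forall i, (i < t)%nat -> (Z.abs (k i) <= Z.of_nat D)%Z.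
Proof.
  induction t as [|s [D HD]]; [exists 0%nat; intros; lia|].
  exists (Nat.max D (Z.to_nat (Z.abs (k s)))). intros i Hi. rewrite Nat2Z.inj_max.
  destruct (Nat.eq_dec i s) as [->|]; [rewrite Z2Nat.id|specialize (HD i ltac:(lia))]; lia.
Qed.

End Lincomb.

Lemma lincomb_unit t m alpha : (m < t)%nat -> lincomb t (zv_unit m) alpha = alpha m.
Proof.
  intros Hm.
  assert (Hlow : forall s, (s <= m)%nat -> lincomb s (zv_unit m) alpha = 0).
  { induction s; intros Hs; simpl; [reflexivity|].
    rewrite IHs by lia. unfold zv_unit. replace (Nat.eqb s m) with false
      by (symmetry; apply Nat.eqb_neq; lia). simpl; ring. }
  induction t as [|s IH]; [lia|]. simpl. unfold zv_unit at 2.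
  destruct (Nat.eq_dec m s) as [->|Hne].
  - rewrite Nat.eqb_refl, Hlow by lia. simpl; ring.
  - replace (Nat.eqb s m) with false by (symmetry; apply Nat.eqb_neq; lia).
    rewrite IH by lia. simpl; ring.
Qed.

Lemma not_in_span_shift_not_int M t alpha beta k :
  (forall i, (i < t)%nat -> (Z.abs (k i) <= Z.of_nat M)%Z) -> ~ in_span M t alpha beta ->
  ~ is_int (beta + lincomb t k alpha) /\ ~ is_int (beta - lincomb t k alpha).
Proof.
  intros Hk Hout. split; intros [z Hz]; apply Hout.
  - exists (zv_opp k). split.
    + intros i Hi. unfold zv_opp. rewrite Z.abs_opp. auto.
    + exists z. rewrite lincomb_opp. lra.
  - exists k. split; [exact Hk|]. exists z. lra.
Qed.

(* A cosine polynomial [sum_j c_j cos (2 PI n (k_j . alpha))] is a list of pairs [(c_j, k_j)]. *)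
Definition cospoly := list (R * (nat -> Z)).

Section CosPoly.

Variables (t : nat) (alpha : nat -> R).

Fixpoint cp_eval (P : cospoly) (n : nat) : R :=
  match P with
  | [] => 0
  | (c, k) :: P' => c * cos (2 * PI * (INR n * lincomb t k alpha)) + cp_eval P' n
  end.

Fixpoint cp_mul_mono (c : R) (k : nat -> Z) (P : cospoly) : cospoly :=
  match P with
  | [] => []
  | (c', k') :: P' => (c * c' / 2, zv_add k k') :: (c * c' / 2, zv_sub k k') :: cp_mul_mono c k P'
  end.

Fixpoint cp_mul (P P' : cospoly) : cospoly :=
  match P with [] => [] | (c, k) :: P0 => cp_mul_mono c k P' ++ cp_mul P0 P' end.

Fixpoint cp_pow (P : cospoly) (p : nat) : cospoly :=
  match p with O => [(1, zv_0)] | S p => cp_mul P (cp_pow P p) end.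

Lemma cp_eval_app P P' n : cp_eval (P ++ P') n = cp_eval P n + cp_eval P' n.
Proof. induction P as [|[c k] P IH]; simpl; [|rewrite IH]; ring. Qed.

Lemma cp_eval_mul_mono c k P n :
  cp_eval (cp_mul_mono c k P) n = c * cos (2 * PI * (INR n * lincomb t k alpha)) * cp_eval P n.
Proof.
  induction P as [|[c' k'] P IH]; simpl; [ring|]. rewrite IH, lincomb_add, lincomb_sub.
  set (u := 2 * PI * (INR n * lincomb t k alpha)).
  set (v := 2 * PI * (INR n * lincomb t k' alpha)).
  replace (2 * PI * (INR n * (lincomb t k alpha + lincomb t k' alpha))) with (u + v)
    by (unfold u, v; ring).
  replace (2 * PI * (INR n * (lincomb t k alpha - lincomb t k' alpha))) with (u - v)
    by (unfold u, v; ring).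
  rewrite cos_plus, cos_minus. field.
Qed.

Lemma cp_eval_mul P P' n : cp_eval (cp_mul P P') n = cp_eval P n * cp_eval P' n.
Proof.
  induction P as [|[c k] P IH]; simpl; [ring|]. rewrite cp_eval_app, cp_eval_mul_mono, IH. ring.
Qed.

Lemma cp_eval_pow P p n : cp_eval (cp_pow P p) n = cp_eval P n ^ p.
Proof.
  induction p as [|p IH]; simpl.
  - rewrite lincomb_0, Rmult_0_r, Rmult_0_r, cos_0. ring.
  - rewrite cp_eval_mul, IH. ring.
Qed.

Lemma cp_freq_bounded (P : cospoly) : exists D : nat,
  forall (c : R) (k : nat -> Z), In (c, k) P ->
  forall i, (i < t)%nat -> (Z.abs (k i) <= Z.of_nat D)%Z.
Proof.
  induction P as [|[c k] P [D HD]]; [exists 0%nat; intros ? ? []|].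
  destruct (coeffs_bounded t k) as [D' HD'].
  exists (Nat.max D D'). intros c' k' [E|Hin] i Hi; rewrite Nat2Z.inj_max.
  - injection E as <- <-. specialize (HD' i Hi). lia.
  - specialize (HD c' k' Hin i Hi). lia.
Qed.

(* [cos u cos v = (cos (u + v) + cos (u - v)) / 2] reduces each term to two Dirichlet sums. *)
Lemma cp_psum_bounded (P : cospoly) (beta : R) :
  (forall (c : R) (k : nat -> Z), In (c, k) P ->
     ~ is_int (beta + lincomb t k alpha) /\ ~ is_int (beta - lincomb t k alpha)) ->
  bounded_psum (fun n => cp_eval P n * cos (2 * PI * (INR n * beta))).
Proof.
  induction P as [|[c k] P IH]; intros HP.
  - exists 0. intros N. rewrite (psum_ext _ (fun _ => 0)) by (intros; simpl; ring).
    rewrite psum_const, Rmult_0_r, Rabs_R0. lra.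
  - destruct (HP c k (or_introl eq_refl)) as [Hplus Hminus].
    set (th := lincomb t k alpha) in *.
    apply (bounded_psum_ext (fun n =>
       (c / 2 * cos (2 * PI * (INR n * (beta + th))) + c / 2 * cos (2 * PI * (INR n * (beta - th))))
       + cp_eval P n * cos (2 * PI * (INR n * beta)))).
    + intros n. simpl. fold th.
      set (u := 2 * PI * (INR n * beta)). set (v := 2 * PI * (INR n * th)).
      replace (2 * PI * (INR n * (beta + th))) with (u + v) by (unfold u, v; ring).
      replace (2 * PI * (INR n * (beta - th))) with (u - v) by (unfold u, v; ring).
      rewrite cos_plus, cos_minus. field.
    + apply bounded_psum_add; [apply bounded_psum_add|].
      1, 2: apply (bounded_psum_scal (c / 2)), cos_psum_bounded; assumption.
      apply IH. intros c' k' Hin. apply (HP c'). right; exact Hin.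
Qed.

End CosPoly.

Section Weight.

Variable alpha : nat -> R.

Fixpoint weight (m n : nat) : R :=
  match m with O => 1 | S m => weight m n + (1 + cos (2 * PI * (INR n * alpha m))) end.

Fixpoint cp_weight (m : nat) : cospoly :=
  match m with O => [(1, zv_0)] | S m => (1, zv_0) :: (1, zv_unit m) :: cp_weight m end.

Lemma cp_eval_weight t m n : (m <= t)%nat -> cp_eval t alpha (cp_weight m) n = weight m n.
Proof.
  induction m as [|m IH]; intros Hm; simpl; rewrite lincomb_0, !Rmult_0_r, cos_0.
  - ring.
  - rewrite IH, lincomb_unit by lia. ring.
Qed.

Lemma weight_ge_1 m n : 1 <= weight m n.
Proof. induction m; simpl; [lra|]. pose proof (COS_bound (2 * PI * (INR n * alpha m))). lra. Qed.

Lemma weight_le m n : weight m n <= 1 + 2 * INR m.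
Proof.
  induction m; simpl weight; [simpl; lra|]. rewrite S_INR.
  pose proof (COS_bound (2 * PI * (INR n * alpha m))). lra.
Qed.

Lemma weight_ge_of_cos m n c : (forall i, (i < m)%nat -> c <= cos (2 * PI * (INR n * alpha i))) ->
  1 + INR m * (1 + c) <= weight m n.
Proof.
  induction m; intros H; simpl weight; [simpl; lra|]. rewrite S_INR.
  specialize (IHm ltac:(intros; apply H; lia)). specialize (H m ltac:(lia)). lra.
Qed.

Lemma weight_le_of_cos m n b i : (i < m)%nat -> cos (2 * PI * (INR n * alpha i)) <= b ->
  weight m n <= 2 * INR m + b.
Proof.
  induction m; intros Hi Hb; [lia|]. simpl weight. rewrite S_INR.
  pose proof (COS_bound (2 * PI * (INR n * alpha m))).
  destruct (Nat.eq_dec i m) as [->|];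
    [pose proof (weight_le m n)|specialize (IHm ltac:(lia) Hb)]; lra.
Qed.

End Weight.

Fixpoint count_upto (b : nat -> bool) (N : nat) : nat :=
  match N with O => O | S N' => (count_upto b N' + (if b N then 1 else 0))%nat end.

Lemma psum_indicator (b : nat -> bool) N :
  psum (fun n => if b n then 1 else 0) N = INR (count_upto b N).
Proof.
  induction N; simpl psum; [reflexivity|]. cbn [count_upto].
  rewrite plus_INR, IHN. destruct (b (S N)); simpl; ring.
Qed.

Fixpoint nsum (Q : nat) (f : nat -> nat) : nat :=
  match Q with O => O | S Q' => (nsum Q' f + f Q')%nat end.

Lemma nsum_add Q f g : nsum Q (fun c => f c + g c)%nat = (nsum Q f + nsum Q g)%nat.
Proof. induction Q; simpl; lia. Qed.

Lemma nsum_scal Q a f : nsum Q (fun c => a * f c)%nat = (a * nsum Q f)%nat.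
Proof. induction Q; simpl; [|rewrite IHQ]; lia. Qed.

Lemma nsum_indicator x Q :
  nsum Q (fun c => if Nat.eqb x c then 1%nat else 0%nat) = if Nat.ltb x Q then 1%nat else 0%nat.
Proof.
  induction Q; simpl; [destruct x; reflexivity|]. rewrite IHQ.
  destruct (Nat.ltb_spec x Q), (Nat.eqb_spec x Q), (Nat.ltb_spec x (S Q)); lia.
Qed.

Lemma nsum_le Q f m : (forall c, (c < Q)%nat -> (f c <= m)%nat) -> (nsum Q f <= Q * m)%nat.
Proof.
  induction Q; intros H; simpl; [lia|].
  specialize (IHQ ltac:(intros; apply H; lia)). specialize (H Q ltac:(lia)). lia.
Qed.

Lemma nsum_count_classes (code : nat -> nat) Q : (forall n, (code n < Q)%nat) ->
  forall N, nsum Q (fun c => count_upto (fun n => Nat.eqb (code n) c) N) = N.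
Proof.
  intros Hc. induction N as [|N IH].
  - simpl. clear Hc. induction Q; simpl; [reflexivity|rewrite IHQ; reflexivity].
  - cbn [count_upto]. rewrite nsum_add, IH, nsum_indicator.
    specialize (Hc (S N)). destruct (Nat.ltb_spec (code (S N)) Q); lia.
Qed.

Lemma pigeonhole_class (code : nat -> nat) Q : (forall n, (code n < Q)%nat) ->
  forall N, exists c, (c < Q)%nat /\ (N <= Q * count_upto (fun n => Nat.eqb (code n) c) N)%nat.
Proof.
  intros Hc N. apply NNPP. intros Hno.
  assert (Hsmall : forall c, (c < Q)%nat ->
            (Q * count_upto (fun n => Nat.eqb (code n) c) N <= N - 1)%nat).
  { intros c Hcq. destruct (Nat.le_gt_cases N (Q * count_upto (fun n => Nat.eqb (code n) c) N));
      [exfalso; apply Hno; exists c; auto|lia]. }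
  pose proof (nsum_le Q _ (N - 1) Hsmall) as Hle.
  rewrite nsum_scal, nsum_count_classes in Hle by exact Hc.
  destruct Q as [|Q]; [specialize (Hc 0%nat); lia|].
  destruct N; [apply Hno; exists 0%nat; lia|nia].
Qed.

Lemma count_upto_first (b : nat -> bool) N : count_upto b N = 0%nat \/
  exists n0, (1 <= n0 <= N)%nat /\ b n0 = true /\ count_upto b (n0 - 1) = 0%nat.
Proof.
  induction N as [|N [H|(n0 & H1 & H2 & H3)]]; [left; reflexivity| |].
  - destruct (b (S N)) eqn:E.
    + right. exists (S N). replace (S N - 1)%nat with N by lia. auto with arith.
    + left. cbn [count_upto]. rewrite E, H. reflexivity.
  - right. exists n0. split; [lia|auto].
Qed.

Lemma count_upto_shift (b : nat -> bool) n0 d :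
  count_upto b (n0 + d) = (count_upto b n0 + count_upto (fun m => b (n0 + m)%nat) d)%nat.
Proof.
  induction d; cbn [count_upto]; [rewrite Nat.add_0_r; lia|].
  rewrite Nat.add_succ_r. cbn [count_upto]. rewrite IHd, <- Nat.add_succ_r. lia.
Qed.

Lemma count_upto_incl (b b' : nat -> bool) d :
  (forall m, (1 <= m <= d)%nat -> b m = true -> b' m = true) ->
  (count_upto b d <= count_upto b' d)%nat.
Proof.
  induction d; intros H; simpl; [lia|].
  specialize (IHd ltac:(intros; apply H; auto; lia)).
  destruct (b (S d)) eqn:E; [rewrite (H (S d)) by (auto; lia)|destruct (b' (S d))]; lia.
Qed.

Lemma count_upto_mono (b : nat -> bool) d N :
  (d <= N)%nat -> (count_upto b d <= count_upto b N)%nat.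
Proof. induction 1; simpl; lia. Qed.

(* Translating a class by its first element lands all its other elements in [b']. *)
Lemma count_upto_le_of_diff (b b' : nat -> bool) :
  (forall n m, (1 <= n < m)%nat -> b n = true -> b m = true -> b' (m - n)%nat = true) ->
  forall N, (count_upto b N <= count_upto b' N + 1)%nat.
Proof.
  intros H N. destruct (count_upto_first b N) as [E|(n0 & Hn0 & Hb & Hbefore)]; [lia|].
  replace N with (n0 + (N - n0))%nat by lia. rewrite count_upto_shift.
  assert (count_upto b n0 = 1%nat) as ->.
  { replace n0 with (S (n0 - 1)) at 1 by lia. cbn [count_upto].
    rewrite Hbefore. replace (S (n0 - 1)) with n0 by lia. rewrite Hb. reflexivity. }
  assert (count_upto (fun m => b (n0 + m)%nat) (N - n0) <= count_upto b' (N - n0))%nat.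
  { apply count_upto_incl. intros m Hm Hbm.
    replace m with ((n0 + m) - n0)%nat by lia. apply H; auto; lia. }
  pose proof (count_upto_mono b' (N - n0) (n0 + (N - n0)) ltac:(lia)). lia.
Qed.

Lemma lower_density_of_code (code : nat -> nat) Q (b : nat -> bool) :
  (forall n, (code n < Q)%nat) ->
  (forall n m, (1 <= n < m)%nat -> code n = code m -> b (m - n)%nat = true) ->
  forall N, (N <= Q * count_upto b N + Q)%nat.
Proof.
  intros Hc Hb N. destruct (pigeonhole_class code Q Hc N) as (c & Hcq & HN).
  assert (count_upto (fun n => Nat.eqb (code n) c) N <= count_upto b N + 1)%nat.
  { apply count_upto_le_of_diff. intros n m Hnm E1 E2.
    apply Nat.eqb_eq in E1, E2. apply Hb; [exact Hnm|congruence]. }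
  nia.
Qed.

Definition indicator (P : nat -> Prop) (n : nat) : bool :=
  if excluded_middle_informative (P n) then true else false.

Lemma indicator_true (P : nat -> Prop) n : P n -> indicator P n = true.
Proof. unfold indicator. destruct (excluded_middle_informative _); tauto. Qed.

Definition digit (L : nat) (x : R) : nat := Z.to_nat (Int_part (INR L * frac_part x)).

Lemma Int_part_bounds y (L : nat) : 0 <= y < INR L -> (0 <= Int_part y < Z.of_nat L)%Z.
Proof.
  intros H. pose proof (base_Int_part y). split.
  - assert (-1 < IZR (Int_part y)) as Hlt by lra. apply lt_IZR in Hlt. lia.
  - apply lt_IZR. rewrite <- INR_IZR_INZ. lra.
Qed.

Lemma digit_spec L x : (1 <= L)%nat ->
  (digit L x < L)%nat /\ Z.of_nat (digit L x) = Int_part (INR L * frac_part x).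
Proof.
  intros HL. pose proof (base_fp x). apply (le_INR 1) in HL. simpl in HL.
  destruct (Int_part_bounds (INR L * frac_part x) L) as [H0 H1]; [nra|].
  unfold digit. rewrite Z2Nat.id by exact H0. split; [lia|reflexivity].
Qed.

Lemma digit_eq_frac_close L x y : (1 <= L)%nat -> digit L x = digit L y ->
  Rabs (frac_part y - frac_part x) < 1 / INR L.
Proof.
  intros HL E. destruct (digit_spec L x HL) as [_ Ex]. destruct (digit_spec L y HL) as [_ Ey].
  assert (HLR : 1 <= INR L) by (apply (le_INR 1); exact HL).
  pose proof (base_Int_part (INR L * frac_part x)).
  pose proof (base_Int_part (INR L * frac_part y)).
  rewrite <- Ex in *. rewrite <- Ey, <- E in *.
  assert (Rabs (INR L * (frac_part y - frac_part x)) < 1) as Hlt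
    by (apply Rabs_def1; lra).
  rewrite Rabs_mult, Rabs_right in Hlt by lra.
  apply Rmult_lt_reg_l with (INR L); [lra|]. field_simplify; lra.
Qed.

Section BohrDensity.

Variables (t : nat) (alpha : nat -> R).

Fixpoint code (L m n : nat) : nat :=
  match m with O => O | S m => (L * code L m n + digit L (INR n * alpha m))%nat end.

Lemma code_lt L m n : (1 <= L)%nat -> (code L m n < L ^ m)%nat.
Proof.
  intros HL. induction m; simpl; [lia|].
  destruct (digit_spec L (INR n * alpha m) HL). nia.
Qed.

Lemma code_eq_digit_eq L m n n' : (1 <= L)%nat -> code L m n = code L m n' ->
  forall i, (i < m)%nat -> digit L (INR n * alpha i) = digit L (INR n' * alpha i).
Proof.
  intros HL. induction m; intros E i Hi; [lia|]. simpl in E.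
  destruct (digit_spec L (INR n * alpha m) HL) as [Hd _].
  destruct (digit_spec L (INR n' * alpha m) HL) as [Hd' _].
  destruct (Nat.div_mod_unique L _ _ _ _ Hd Hd' E) as [Ec Ed].
  destruct (Nat.eq_dec i m) as [->|]; [exact Ed|apply IHm; auto; lia].
Qed.

Lemma code_eq_Bohr L dl n m : (1 <= L)%nat -> 1 / INR L <= dl -> (1 <= n < m)%nat ->
  code L t n = code L t m -> Bohr t alpha dl (m - n).
Proof.
  intros HL Hdl Hnm E. split; [lia|]. intros i Hi.
  pose proof (digit_eq_frac_close L _ _ HL (code_eq_digit_eq L t n m HL E i Hi)) as Hc.
  set (zm := Int_part (INR m * alpha i)). set (zn := Int_part (INR n * alpha i)).
  eapply Rle_trans; [apply (dnint_le_dist_IZR _ (zm - zn))|].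
  rewrite minus_INR, minus_IZR by lia.
  pose proof (Rplus_Int_part_frac_part (INR m * alpha i)).
  pose proof (Rplus_Int_part_frac_part (INR n * alpha i)).
  replace ((INR m - INR n) * alpha i - (IZR zm - IZR zn))
    with (frac_part (INR m * alpha i) - frac_part (INR n * alpha i)) by (unfold zm, zn; lra).
  lra.
Qed.

(* Pigeonholing [n] by its code: differences within a code class lie in the Bohr set. *)
Lemma Bohr_lower_density dl : 0 < dl -> exists Q : nat,
  forall N, (N <= Q * count_upto (indicator (Bohr t alpha dl)) N + Q)%nat.
Proof.
  intros Hdl. destruct (INR_archimed dl 1 Hdl) as [L HL].
  assert (HL1 : (1 <= L)%nat) by (destruct L; [simpl in HL; lra|lia]).
  assert (HLR : 0 < INR L) by (apply lt_0_INR; lia).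
  exists (L ^ t)%nat. apply (lower_density_of_code (code L t)).
  - intros n. apply code_lt, HL1.
  - intros n m Hnm E. apply indicator_true, (code_eq_Bohr L); auto.
    apply Rmult_le_reg_l with (INR L); [exact HLR|]. field_simplify; lra.
Qed.

End BohrDensity.

Lemma psum_unbounded (f : nat -> R) (b : nat -> bool) (c d : R) (Q : nat) (K : R) :
  0 < c -> INR Q * d < c ->
  (forall n, (1 <= n)%nat -> c * (if b n then 1 else 0) - d <= f n) ->
  (forall N, (N <= Q * count_upto b N + Q)%nat) ->
  exists N, K < psum f N.
Proof.
  intros Hc Hgap Hf Hdens.
  assert (HQ : 0 < INR Q).
  { destruct Q; [|apply lt_0_INR; lia]. specialize (Hdens 1%nat). simpl in Hdens. lia. }
  destruct (INR_archimed (c - INR Q * d) (INR Q * K + c * INR Q) ltac:(lra)) as [N HN].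
  exists N.
  assert (Hlow : c * INR (count_upto b N) - INR N * d <= psum f N).
  { replace (c * INR (count_upto b N) - INR N * d)
      with (psum (fun n => c * (if b n then 1 else 0) + - d) N)
      by (rewrite psum_add, psum_scal, psum_indicator, psum_const; ring).
    apply psum_le. intros n Hn. specialize (Hf n Hn). lra. }
  assert (HN' : INR N <= INR Q * INR (count_upto b N) + INR Q)
    by (rewrite <- mult_INR, <- plus_INR; apply le_INR, Hdens).
  apply Rmult_lt_reg_l with (INR Q); [exact HQ|]. nra.
Qed.

Lemma pow_gap (A B c : R) : 0 <= B < A -> exists p : nat, c * B ^ p < A ^ p.
Proof.
  intros HAB.
  assert (Hratio : Rabs (B / A) < 1).
  { rewrite Rabs_right by (apply Rle_ge, Rmult_le_pos; [|apply Rlt_le, Rinv_0_lt_compat]; lra).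
    apply Rmult_lt_reg_r with A; [lra|]. field_simplify; lra. }
  destruct (pow_lt_1_zero (B / A) Hratio (1 / (Rabs c + 1))
              ltac:(apply Rdiv_lt_0_compat; pose proof (Rabs_pos c); lra)) as [p Hp].
  exists p. specialize (Hp p (le_n p)).
  assert (0 < A ^ p) by (apply pow_lt; lra).
  assert (0 <= B ^ p) by (apply pow_le; lra).
  unfold Rdiv in Hp. rewrite Rpow_mult_distr, pow_inv, Rabs_mult, !Rabs_right in Hp
    by (try apply Rle_ge, pow_le; try apply Rle_ge, Rlt_le, Rinv_0_lt_compat; lra).
  assert (B ^ p * (Rabs c + 1) < A ^ p).
  { apply Rmult_lt_compat_r with (r := A ^ p * (Rabs c + 1)) in Hp; [|pose proof (Rabs_pos c); nra].
    field_simplify in Hp; [lra|pose proof (Rabs_pos c); lra|lra]. }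
  pose proof (Rle_abs c). nra.
Qed.

Lemma weight_gap t alpha eps : 0 < eps -> exists dl A B, 0 < dl /\ 0 <= B < A /\
  (forall n, Bohr t alpha dl n -> A <= weight alpha t n) /\
  (forall n, (1 <= n)%nat -> ~ Bohr t alpha eps n -> weight alpha t n <= B).
Proof.
  intros Heps. pose proof PI_RGT_0. pose proof (pos_INR t).
  set (e := Rmin eps (1/4)).
  assert (He : 0 < e <= 1/4 /\ e <= eps) by (unfold e, Rmin; destruct (Rle_dec _ _); lra).
  set (b0 := cos (2 * PI * e)).
  assert (Hb0 : 0 <= b0 < 1).
  { unfold b0. split; [apply cos_ge_0; nra|].
    rewrite <- cos_0. replace 0 with (2 * PI * 0) by ring. apply cos_2PI_lt; lra. }
  destruct (cos_2PI_near_one ((1 - b0) / (INR t + 1)) (1/2)) as (dl & Hdl & Hcos);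
    [apply Rdiv_lt_0_compat; lra|lra|].
  pose proof (COS_bound (2 * PI * dl)).
  exists dl, (1 + INR t * (1 + cos (2 * PI * dl))), (2 * INR t + b0).
  split; [lra|split; [split|split]].
  - lra.
  - assert (INR t * (1 - cos (2 * PI * dl)) < 1 - b0); [|lra].
    apply Rmult_lt_compat_r with (r := INR t + 1) in Hcos; [|lra].
    replace ((1 - b0) / (INR t + 1) * (INR t + 1)) with (1 - b0) in Hcos by (field; lra). nra.
  - intros n [_ Hn]. apply weight_ge_of_cos. intros i Hi.
    rewrite (cos_2PI_dnint (INR n * alpha i)). pose proof (dnint_range (INR n * alpha i)).
    specialize (Hn i Hi).
    apply cos_2PI_le; lra.
  - intros n Hn Hout.
    assert (exists i, (i < t)%nat /\ eps < dnint (INR n * alpha i)) as (i & Hi & Hgt).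
    { apply NNPP. intros Hno. apply Hout. split; [exact Hn|]. intros i Hi.
      apply Rnot_lt_le. intros Hlt. apply Hno. exists i; auto. }
    apply (weight_le_of_cos alpha t n b0 i Hi).
    rewrite cos_2PI_dnint. left. apply cos_2PI_lt; [|apply dnint_range]; lra.
Qed.

Section WeightedCosSum.

Variables (t : nat) (alpha : nat -> R) (eps dl A B : R).
Hypothesis HBA : 0 <= B < A.
Hypothesis HA : forall n, Bohr t alpha dl n -> A <= weight alpha t n.
Hypothesis HB : forall n, (1 <= n)%nat -> ~ Bohr t alpha eps n -> weight alpha t n <= B.

Lemma weighted_cos_lower beta p n : (1 <= n)%nat -> normS_le beta (Bohr t alpha eps) (1/6) ->
  A ^ p / 2 * (if indicator (Bohr t alpha dl) n then 1 else 0) - B ^ p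
  <= weight alpha t n ^ p * cos (2 * PI * (INR n * beta)).
Proof.
  intros Hn Hbeta.
  pose proof (weight_ge_1 alpha t n) as Hw.
  assert (0 <= weight alpha t n ^ p) by (apply pow_le; lra).
  assert (0 <= B ^ p) by (apply pow_le; lra).
  unfold indicator. destruct (excluded_middle_informative (Bohr t alpha dl n)) as [Hdl|Hdl].
  - assert (HAw : A ^ p <= weight alpha t n ^ p) by (apply pow_incr; specialize (HA n Hdl); lra).
    destruct (classic (Bohr t alpha eps n)) as [Heps|Heps];
      [|specialize (HA n Hdl); specialize (HB n Hn Heps); lra].
    assert (1/2 <= cos (2 * PI * (INR n * beta))); [|nra].
    rewrite cos_2PI_dnint. apply cos_2PI_ge_half.
    pose proof (dnint_range (INR n * beta)). specialize (Hbeta n Heps). lra.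
  - pose proof (COS_bound (2 * PI * (INR n * beta))).
    destruct (classic (Bohr t alpha eps n)) as [Heps|Heps].
    + assert (0 <= cos (2 * PI * (INR n * beta))); [|nra].
      rewrite cos_2PI_dnint. apply cos_ge_0; pose proof PI_RGT_0;
        pose proof (dnint_range (INR n * beta)); specialize (Hbeta n Heps); nra.
    + assert (weight alpha t n ^ p <= B ^ p) by (apply pow_incr; specialize (HB n Hn Heps); lra).
      nra.
Qed.

End WeightedCosSum.

Theorem in_span_of_normS_Bohr t alpha eps : 0 < eps -> exists M : nat, (1 <= M)%nat /\
  forall beta, normS_le beta (Bohr t alpha eps) (1/6) -> in_span M t alpha beta.
Proof.
  intros Heps.
  destruct (weight_gap t alpha eps Heps) as (dl & A & B & Hdl & HBA & HA & HB).
  destruct (Bohr_lower_density t alpha dl Hdl) as [Q HQ].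
  destruct (pow_gap A B (2 * INR Q) HBA) as [p Hp].
  set (P := cp_pow (cp_weight t) p).
  destruct (cp_freq_bounded t P) as [D HD].
  exists (Nat.max D 1). split; [lia|]. intros beta Hbeta. apply NNPP. intros Hout.
  destruct (cp_psum_bounded t alpha P beta) as [K HK].
  { intros c k Hin. apply (not_in_span_shift_not_int (Nat.max D 1)); [|exact Hout].
    intros i Hi. specialize (HD c k Hin i Hi). lia. }
  set (f := fun n => cp_eval t alpha P n * cos (2 * PI * (INR n * beta))) in HK.
  destruct (psum_unbounded f (indicator (Bohr t alpha dl)) (A ^ p / 2) (B ^ p) Q K) as [N HN].
  - pose proof (pow_lt A p). lra.
  - lra.
  - intros n Hn. unfold f, P. rewrite cp_eval_pow, cp_eval_weight by lia.
    apply (weighted_cos_lower t alpha eps dl); assumption.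
  - exact HQ.
  - specialize (HK N). pose proof (Rle_abs (psum f N)). lra.
Qed.

Lemma periodic_add_INR V : periodic V -> forall n x, V x <-> V (x + INR n).
Proof.
  intros HV n. induction n; intros x; [rewrite Rplus_0_r; tauto|].
  rewrite S_INR, (IHn x). replace (x + (INR n + 1)) with ((x + INR n) + 1) by ring. apply HV.
Qed.

Lemma periodic_add_IZR V : periodic V -> forall z x, V x <-> V (x + IZR z).
Proof.
  intros HV z x. destruct (Z_le_gt_dec 0 z) as [H|H].
  - rewrite <- (Z2Nat.id z H), <- INR_IZR_INZ. apply periodic_add_INR, HV.
  - replace (IZR z) with (- INR (Z.to_nat (- z)))
      by (rewrite INR_IZR_INZ, Z2Nat.id, opp_IZR by lia; ring).
    rewrite (periodic_add_INR V HV (Z.to_nat (- z)) (x + - _)).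
    replace (x + - INR (Z.to_nat (- z)) + INR (Z.to_nat (- z))) with x by ring. tauto.
Qed.

Lemma dnint_mult_gt_locally c x n : (1 <= n)%nat -> c < dnint (INR n * x) ->
  exists d, 0 < d /\ forall y, Rabs (y - x) < d -> c < dnint (INR n * y).
Proof.
  intros Hn Hc. assert (1 <= INR n) by (apply (le_INR 1); exact Hn).
  exists ((dnint (INR n * x) - c) / INR n). split; [apply Rdiv_lt_0_compat; lra|].
  intros y Hy. pose proof (dnint_le_dist_add (INR n * x) (INR n * y)) as Hlip.
  replace (INR n * x - INR n * y) with (INR n * - (y - x)) in Hlip by ring.
  rewrite Rabs_mult, Rabs_Ropp, Rabs_right in Hlip by lra.
  apply Rmult_lt_compat_l with (r := INR n) in Hy; [|lra].
  replace (INR n * ((dnint (INR n * x) - c) / INR n)) with (dnint (INR n * x) - c) in Hy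
    by (field; lra).
  lra.
Qed.

Lemma unit_interval_finite_subcover (d : R -> R) : (forall x, 0 < d x) ->
  exists l : list R, forall y, 0 <= y <= 1 -> exists x, In x l /\ Rabs (y - x) < d x.
Proof.
  intros Hd.
  set (fam := fun x y => (0 <= x <= 1) /\ Rabs (y - x) < d x).
  assert (Hfam : forall x, (exists y, fam x y) -> 0 <= x <= 1) by (intros x [y [H _]]; exact H).
  set (F := Rtopology.mkfamily (fun x => 0 <= x <= 1) fam Hfam).
  assert (Hcov : Rtopology.covering_open_set (fun c => 0 <= c <= 1) F).
  { split.
    - intros x Hx. exists x. simpl. split; [exact Hx|]. rewrite Rminus_diag, Rabs_R0. apply Hd.
    - intros x y [Hx Hy].
      assert (Hr : 0 < d x - Rabs (y - x)) by lra.
      exists (mkposreal _ Hr). intros z Hz. unfold Rtopology.disc in Hz. simpl in Hz |- *.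
      split; [exact Hx|].
      replace (z - x) with ((z - y) + (y - x)) by ring.
      eapply Rle_lt_trans; [apply Rabs_triang|]. lra. }
  destruct (Rtopology.compact_P3 0 1 F Hcov) as (D & Hsub & l & Hl).
  exists l. intros y Hy. destruct (Hsub y Hy) as (x & [Hx1 Hx2] & Hx3).
  exists x. split; [apply Hl; split; assumption|exact Hx2].
Qed.

Lemma excluded_locally t alpha eps M V :
  (forall beta, normS_le beta (Bohr t alpha eps) (1/6) -> in_span M t alpha beta) ->
  openR V -> (forall x, in_span M t alpha x -> V x) ->
  forall x, exists dn : R * nat, 0 < fst dn /\
    ((forall y, Rabs (y - x) < fst dn -> V y) \/
     (Bohr t alpha eps (snd dn) /\
      forall y, Rabs (y - x) < fst dn -> 1/6 < dnint (INR (snd dn) * y))).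
Proof.
  intros HM HO HS x. destruct (classic (V x)) as [Hv|Hv].
  - destruct (HO x Hv) as (d & Hd & Hball). exists (d, 1%nat). simpl. auto.
  - assert (exists n, Bohr t alpha eps n /\ 1/6 < dnint (INR n * x)) as (n & Hb & Hgt).
    { apply NNPP. intros Hno. apply Hv, HS, HM. intros n Hb.
      apply Rnot_lt_le. intros Hlt. apply Hno. exists n; auto. }
    destruct (dnint_mult_gt_locally (1/6) x n (proj1 Hb) Hgt) as (d & Hd & Hball).
    exists (d, n). simpl. auto.
Qed.

Theorem in_open_of_normS_BohrN t alpha eps M :
  (forall beta, normS_le beta (Bohr t alpha eps) (1/6) -> in_span M t alpha beta) ->
  forall V, periodic V -> openR V -> (forall x, in_span M t alpha x -> V x) ->
  exists N : nat, (1 <= N)%nat /\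
    forall beta, normS_le beta (BohrN N t alpha eps) (1/6) -> V beta.
Proof.
  intros HM V HV HO HS.
  destruct (choice _ (excluded_locally t alpha eps M V HM HO HS)) as [F HF].
  destruct (unit_interval_finite_subcover (fun x => fst (F x))) as [l Hl];
    [intros x; apply (HF x)|].
  set (N := Nat.max 1 (list_max (map (fun x => snd (F x)) l))).
  exists N. split; [lia|]. intros beta Hbeta.
  pose proof (base_fp beta). pose proof (Rplus_Int_part_frac_part beta).
  enough (V (frac_part beta)) as Hfrac.
  { apply (periodic_add_IZR V HV (Int_part beta)) in Hfrac.
    replace beta with (frac_part beta + IZR (Int_part beta)) by lra. exact Hfrac. }
  destruct (Hl (frac_part beta)) as (x & Hin & Hx); [lra|].
  destruct (HF x) as [_ [Hv|[Hb Hgt]]]; [exact (Hv _ Hx)|exfalso].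
  set (n := snd (F x)) in *.
  assert (Hn : (n <= N)%nat).
  { enough (n <= list_max (map (fun x => snd (F x)) l))%nat by lia.
    apply (proj1 (Forall_forall _ _) (proj1 (list_max_le _ _) (le_n _))).
    exact (in_map (fun y => snd (F y)) l x Hin). }
  specialize (Hbeta n (conj Hb Hn)). specialize (Hgt _ Hx).
  replace (INR n * beta) with (INR n * frac_part beta + IZR (Z.of_nat n * Int_part beta)) in Hbeta
    by (rewrite mult_IZR, <- INR_IZR_INZ; nra).
  rewrite dnint_add_IZR in Hbeta. lra.
Qed.

Theorem lemma4 (t : nat) (alpha : nat -> R) (eps : R) (heps : 0 < eps) :
  (exists M : nat, (1 <= M)%nat /\
     forall beta : R, normS_le beta (Bohr t alpha eps) (1/6) -> in_span M t alpha beta)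
  /\
  (forall M : nat, (1 <= M)%nat ->
     (forall beta : R, normS_le beta (Bohr t alpha eps) (1/6) -> in_span M t alpha beta) ->
     forall V : R -> Prop, periodic V -> openR V ->
       (forall x : R, in_span M t alpha x -> V x) ->
       exists N : nat, (1 <= N)%nat /\
         forall beta : R, normS_le beta (BohrN N t alpha eps) (1/6) -> V beta).
Proof.
  split.
  - exact (in_span_of_normS_Bohr t alpha eps heps).
  - intros M _ HM. exact (in_open_of_normS_BohrN t alpha eps M HM).
Qed.
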